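(* The maps $\eta:\widetilde{S}_{AB}\to\mathfrak{S}_A$, $\inf^{\widetilde{S}_{AB}}_{i\in I}\sigma_{i,A}\widetilde{\otimes}\sigma_{i,B}\mapsto\inf^{\mathfrak{S}_A}_{i\in I}\sigma_{i,A}$ and $\lambda:\widetilde{S}_{AB}\to\mathfrak{S}_B$, $\inf^{\widetilde{S}_{AB}}_{i\in I}\sigma_{i,A}\widetilde{\otimes}\sigma_{i,B}\mapsto\inf^{\mathfrak{S}_B}_{i\in I}\sigma_{i,B}$ are (well-defined) Inf semi-lattice homomorphisms.
   Context: $\mathfrak{B}=\{\mathbf{Y},\mathbf{N},\bot\}$ with meet $\wedge$ and product $\bullet$ ($x\bullet\mathbf{Y}=x$, $x\bullet\mathbf{N}=\mathbf{N}$, $\bot\bullet\bot=\bot$). $(\mathfrak{S}_A,\mathfrak{E}_A,\epsilon^{\mathfrak{S}_A})$, $(\mathfrak{S}_B,\mathfrak{E}_B,\epsilon^{\mathfrak{S}_B})$ are States/Effects Chu spaces (down-complete Inf semi-lattices, infima written $\inf$, evaluation maps preserving infima in each variable, a constant-$\mathbf{Y}$ effect $\mathfrak{Y}_{\mathfrak{E}}$ in each). The minimal tensor product $\widetilde{S}_{AB}$ consists of the maps $\inf^{\widetilde{S}_{AB}}_{i\in I}\sigma_{i,A}\widetilde{\otimes}\sigma_{i,B}:(\mathfrak{l}_A,\mathfrak{l}_B)\mapsto\bigwedge_{i\in I}\epsilon^{\mathfrak{S}_A}_{\mathfrak{l}_A}(\sigma_{i,A})\bullet\epsilon^{\mathfrak{S}_B}_{\mathfrak{l}_B}(\sigma_{i,B})$,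 ordered pointwise. *)

Inductive Bool3 : Type := BY | BN | Bbot.

Definition Ble (x y : Bool3) : Prop := x = y \/ x = Bbot.

Definition Bmeet (x y : Bool3) : Bool3 :=
  match x, y with
  | BY, BY => BY
  | BN, BN => BN
  | _, _ => Bbot
  end.

Definition Bprod (x y : Bool3) : Bool3 :=
  match x, y with
  | _, BY => x
  | _, BN => BN
  | BY, Bbot => Bbot
  | BN, Bbot => BN
  | Bbot, Bbot => Bbot
  end.

Definition is_glb {T : Type} (le : T -> T -> Prop) {I : Type} (f : I -> T) (x : T) : Prop :=
  (forall i, le x (f i)) /\ (forall y, (forall i, le y (f i)) -> le y x).

Record InfSL : Type := {
  car :> Type;
  le : car -> car -> Prop;
  le_refl : forall x, le x x;
  le_trans : forall x y z, le x y -> le y z -> le x z;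
  le_antisym : forall x y, le x y -> le y x -> x = y;
  inf : forall (I : Type), (I -> car) -> car;
  inf_glb : forall (I : Type) (f : I -> car), inhabited I -> is_glb le f (inf I f)
}.

Arguments le {_} _ _.
Arguments inf {_} {I} _.

Record ChuSE : Type := {
  St : InfSL;
  Ef : InfSL;
  eps : Ef -> St -> Bool3;
  eps_inf_St : forall (l : Ef) (I : Type) (f : I -> St), inhabited I ->
      is_glb Ble (fun i => eps l (f i)) (eps l (inf f));
  eps_inf_Ef : forall (s : St) (I : Type) (f : I -> Ef), inhabited I ->
      is_glb Ble (fun i => eps (f i) s) (eps (inf f) s);
  YE : Ef;
  eps_YE : forall s : St, eps YE s = BY;
  eps_sep : forall s s' : St, (forall l : Ef, eps l s = eps l s') -> s = s'
}.

Definition represents (A B : ChuSE) (g : Ef A -> Ef B -> Bool3)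
  {I : Type} (sA : I -> St A) (sB : I -> St B) : Prop :=
  inhabited I /\
  forall lA lB, is_glb Ble (fun i => Bprod (eps A lA (sA i)) (eps B lB (sB i))) (g lA lB).

Definition tensor (A B : ChuSE) : Type :=
  { g : Ef A -> Ef B -> Bool3 |
    exists (I : Type) (sA : I -> St A) (sB : I -> St B), represents A B g sA sB }.

Definition tensor_le (A B : ChuSE) (g h : tensor A B) : Prop :=
  forall lA lB, Ble (proj1_sig g lA lB) (proj1_sig h lA lB).

Definition InfHom (A B : ChuSE) (S : InfSL) (phi : tensor A B -> S) : Prop :=
  forall (J : Type) (g : J -> tensor A B) (h : tensor A B),
    inhabited J -> is_glb (tensor_le A B) g h ->
    is_glb le (fun j => phi (g j)) (phi h).

From Stdlib Require Import ClassicalEpsilon.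

(* Effects separate states, so a state is determined by its evaluations and the
   order on states is the pointwise order of evaluations.  Since the effect
   [YE B] evaluates every state to [BY], evaluating a tensor element [g] at
   [(lA, YE B)] gives [lA |-> eps lA (inf sA)] for any representation of [g];
   this defines [eta g] independently of the representation.  For an infimum [h]
   of a family [g j], the lower bound of [h] needed for [eta] to preserve it is
   the infimum of all pure tensors [a (x) b] lying above some [g j]: its
   [A]-marginal is the infimum of those [a], each of which lies above some
   [eta (g j)].  The map [lambda] is [eta] for the swapped tensor. *)

Lemma Ble_refl (x : Bool3) : Ble x x.
Proof. now left. Qed.

Lemma Ble_trans (x y z : Bool3) : Ble x y -> Ble y z -> Ble x z.
Proof. unfold Ble; intros [->| ->] [->| ->]; auto. Qed.

Lemma Ble_antisym (x y : Bool3) : Ble x y -> Ble y x -> x = y.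
Proof. unfold Ble; intros [->| ->] [Hyx| ->]; auto. Qed.

Lemma is_glb_Ble_unique {I : Type} (f : I -> Bool3) (x y : Bool3) :
  is_glb Ble f x -> is_glb Ble f y -> x = y.
Proof. intros [Hx Gx] [Hy Gy]; apply Ble_antisym; auto. Qed.

Lemma is_glb_Ble_ext {I : Type} (f f' : I -> Bool3) (x : Bool3) :
  (forall i, f i = f' i) -> is_glb Ble f x -> is_glb Ble f' x.
Proof.
  intros E [Hlb Hg]; split.
  - intros i; rewrite <- E; apply Hlb.
  - intros y Hy; apply Hg; intros i; rewrite E; apply Hy.
Qed.

Lemma Bprod_comm (x y : Bool3) : Bprod x y = Bprod y x.
Proof. now destruct x, y. Qed.

Lemma Bprod_Yr (x : Bool3) : Bprod x BY = x.
Proof. now destruct x. Qed.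

Definition glbB {I : Type} (f : I -> Bool3) : Bool3 :=
  if excluded_middle_informative (forall i, f i = BY) then BY
  else if excluded_middle_informative (forall i, f i = BN) then BN
  else Bbot.

Lemma glbB_is_glb {I : Type} (f : I -> Bool3) : inhabited I -> is_glb Ble f (glbB f).
Proof.
  intros [i0]; unfold glbB.
  destruct (excluded_middle_informative _) as [HY|HY];
    [|destruct (excluded_middle_informative _) as [HN|HN]].
  - split; [intros i; rewrite HY; apply Ble_refl|].
    intros y Hy; rewrite <- (HY i0); apply Hy.
  - split; [intros i; rewrite HN; apply Ble_refl|].
    intros y Hy; rewrite <- (HN i0); apply Hy.
  - split; [intros i; now right|].
    intros [| |] Hy; [exfalso; apply HY | exfalso; apply HN | apply Ble_refl];
      intros i; destruct (Hy i); congruence.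
Qed.

Section InfPair.
Variable S : InfSL.

Definition inf2 (s t : S) : S := inf (fun b : bool => if b then s else t).

Lemma inf2_le_r (s t : S) : le (inf2 s t) t.
Proof. exact (proj1 (inf_glb _ _ _ (inhabits true)) false). Qed.

Lemma inf2_of_le (s t : S) : le s t -> inf2 s t = s.
Proof.
  intros Hst; apply le_antisym.
  - exact (proj1 (inf_glb _ _ _ (inhabits true)) true).
  - apply (inf_glb _ _ _ (inhabits true)); intros [|]; [apply le_refl | exact Hst].
Qed.

End InfPair.

Section ChuStates.
Variable C : ChuSE.

Lemma eps_inf2_le_r (l : Ef C) (s t : St C) : Ble (eps C l (inf2 _ s t)) (eps C l t).
Proof. exact (proj1 (eps_inf_St C l _ _ (inhabits true)) false). Qed.

Lemma eps_inf2_of_Ble (l : Ef C) (s t : St C) :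
  Ble (eps C l s) (eps C l t) -> eps C l (inf2 _ s t) = eps C l s.
Proof.
  intros Hst; apply (is_glb_Ble_unique (fun b : bool => eps C l (if b then s else t))).
  - apply eps_inf_St, (inhabits true).
  - split; [intros [|]; [apply Ble_refl | exact Hst]|].
    intros y Hy; exact (Hy true).
Qed.

Lemma le_St_eps (s t : St C) : le s t <-> forall l, Ble (eps C l s) (eps C l t).
Proof.
  split.
  - intros Hst l; rewrite <- (inf2_of_le _ _ _ Hst); apply eps_inf2_le_r.
  - intros Hst.
    assert (Hinf : inf2 _ s t = s) by (apply (eps_sep C); intros l; apply eps_inf2_of_Ble, Hst).
    rewrite <- Hinf; apply inf2_le_r.
Qed.

End ChuStates.

Section Swap.
Variables A B : ChuSE.

Lemma represents_swap (g : Ef A -> Ef B -> Bool3) {I : Type}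
    (sA : I -> St A) (sB : I -> St B) :
  represents A B g sA sB -> represents B A (fun lB lA => g lA lB) sB sA.
Proof.
  intros [HI Hg]; split; [exact HI|].
  intros lB lA; apply (is_glb_Ble_ext _ _ _ (fun i => Bprod_comm _ _)), Hg.
Qed.

Lemma tswap_represented (g : tensor A B) :
  exists (I : Type) (sB : I -> St B) (sA : I -> St A),
    represents B A (fun lB lA => proj1_sig g lA lB) sB sA.
Proof.
  destruct (proj2_sig g) as (I & sA & sB & Hrep).
  exists I, sB, sA; exact (represents_swap _ _ _ Hrep).
Qed.

Definition tswap (g : tensor A B) : tensor B A := exist _ _ (tswap_represented g).

End Swap.

Lemma is_glb_tswap (A B : ChuSE) {J : Type} (g : J -> tensor A B) (h : tensor A B) :
  is_glb (tensor_le A B) g h -> is_glb (tensor_le B A) (fun j => tswap A B (g j)) (tswap A B h).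
Proof.
  intros [Hlb Hglb]; split.
  - intros j lB lA; apply Hlb.
  - intros y Hy lB lA; exact (Hglb (tswap B A y) (fun j lA' lB' => Hy j lB' lA') lA lB).
Qed.


Section Marginal.
Variables A B : ChuSE.

Lemma represents_eps_YE_r (g : Ef A -> Ef B -> Bool3) {I : Type}
    (sA : I -> St A) (sB : I -> St B) :
  represents A B g sA sB -> forall lA, g lA (YE B) = eps A lA (inf sA).
Proof.
  intros [HI Hg] lA.
  apply (is_glb_Ble_unique (fun i => eps A lA (sA i))).
  - apply (is_glb_Ble_ext _ _ _) with (2 := Hg lA (YE B)).
    intros i; rewrite eps_YE; apply Bprod_Yr.
  - apply eps_inf_St, HI.
Qed.

Lemma marginal_exists (g : tensor A B) :
  exists s : St A, forall lA, eps A lA s = proj1_sig g lA (YE B).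
Proof.
  destruct (proj2_sig g) as (I & sA & sB & Hrep).
  exists (inf sA); intros lA; symmetry; exact (represents_eps_YE_r _ _ _ Hrep lA).
Qed.

Definition eta (g : tensor A B) : St A :=
  proj1_sig (constructive_indefinite_description _ (marginal_exists g)).

Lemma eps_eta (g : tensor A B) (lA : Ef A) : eps A lA (eta g) = proj1_sig g lA (YE B).
Proof. exact (proj2_sig (constructive_indefinite_description _ (marginal_exists g)) lA). Qed.

Lemma eta_represents (g : tensor A B) {I : Type} (sA : I -> St A) (sB : I -> St B) :
  represents A B (proj1_sig g) sA sB -> eta g = inf sA.
Proof.
  intros Hrep; apply (eps_sep A); intros lA.
  rewrite eps_eta; exact (represents_eps_YE_r _ _ _ Hrep lA).
Qed.

Definition ptensor (a : St A) (b : St B) (lA : Ef A) (lB : Ef B) : Bool3 :=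
  Bprod (eps A lA a) (eps B lB b).

Lemma ptensor_YE_r (a : St A) (b : St B) (lA : Ef A) : ptensor a b lA (YE B) = eps A lA a.
Proof. unfold ptensor; rewrite eps_YE; apply Bprod_Yr. Qed.

Section PureMajorants.
Variables (J : Type) (g : J -> tensor A B).
Hypothesis J_inhabited : inhabited J.

Definition pure_majorant : Type :=
  { ab : St A * St B |
    exists j, forall lA lB, Ble (proj1_sig (g j) lA lB) (ptensor (fst ab) (snd ab) lA lB) }.

Lemma pure_majorant_inhabited : inhabited pure_majorant.
Proof.
  destruct J_inhabited as [j].
  destruct (proj2_sig (g j)) as (I & sA & sB & [[i] Hg]).
  constructor; exists (sA i, sB i), j; intros lA lB; exact (proj1 (Hg lA lB) i).
Qed.

Definition majorant_meet_fun (lA : Ef A) (lB : Ef B) : Bool3 :=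
  glbB (fun k : pure_majorant => ptensor (fst (proj1_sig k)) (snd (proj1_sig k)) lA lB).

Lemma majorant_meet_fun_is_glb (lA : Ef A) (lB : Ef B) :
  is_glb Ble (fun k : pure_majorant => ptensor (fst (proj1_sig k)) (snd (proj1_sig k)) lA lB)
    (majorant_meet_fun lA lB).
Proof. apply glbB_is_glb, pure_majorant_inhabited. Qed.

Lemma majorant_meet_represented :
  exists (I : Type) (sA : I -> St A) (sB : I -> St B), represents A B majorant_meet_fun sA sB.
Proof.
  exists pure_majorant, (fun k => fst (proj1_sig k)), (fun k => snd (proj1_sig k)).
  split; [exact pure_majorant_inhabited | exact majorant_meet_fun_is_glb].
Qed.

Definition majorant_meet : tensor A B := exist _ _ majorant_meet_represented.

Lemma majorant_meet_le (j : J) : tensor_le A B majorant_meet (g j).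
Proof.
  intros lA lB.
  destruct (proj2_sig (g j)) as (I & sA & sB & [_ Hg]).
  apply (Hg lA lB); intros i.
  set (k := exist _ (sA i, sB i) (ex_intro _ j (fun lA' lB' => proj1 (Hg lA' lB') i))
            : pure_majorant).
  exact (proj1 (majorant_meet_fun_is_glb lA lB) k).
Qed.

Lemma eps_le_majorant_meet (y : St A) :
  (forall j, le y (eta (g j))) ->
  forall lA, Ble (eps A lA y) (proj1_sig majorant_meet lA (YE B)).
Proof.
  intros Hy lA; apply (majorant_meet_fun_is_glb lA (YE B)).
  intros [[a b] [j Hj]]; simpl.
  specialize (Hj lA (YE B)); rewrite <- eps_eta in Hj; rewrite ptensor_YE_r in *.
  exact (Ble_trans _ _ _ (proj1 (le_St_eps _ _ _) (Hy j) lA) Hj).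
Qed.

End PureMajorants.

Lemma InfHom_eta : InfHom A B (St A) eta.
Proof.
  intros J g h HJ [Hlb Hglb]; split.
  - intros j; apply le_St_eps; intros lA; rewrite !eps_eta; apply Hlb.
  - intros y Hy; apply le_St_eps; intros lA; rewrite eps_eta.
    apply Ble_trans with (1 := eps_le_majorant_meet J g HJ y Hy lA).
    apply (Hglb _ (majorant_meet_le J g HJ)).
Qed.

End Marginal.

Theorem mainTheorem7 (A B : ChuSE) :
  (exists eta : tensor A B -> St A,
      (forall (g : tensor A B) (I : Type) (sA : I -> St A) (sB : I -> St B),
          represents A B (proj1_sig g) sA sB -> eta g = inf sA)
      /\ InfHom A B (St A) eta)
  /\
  (exists lambda : tensor A B -> St B,
      (forall (g : tensor A B) (I : Type) (sA : I -> St A) (sB : I -> St B),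
          represents A B (proj1_sig g) sA sB -> lambda g = inf sB)
      /\ InfHom A B (St B) lambda).
Proof.
  split.
  - exists (eta A B); split.
    + intros g I sA sB; apply eta_represents.
    + apply InfHom_eta.
  - exists (fun g => eta B A (tswap A B g)); split.
    + intros g I sA sB Hrep; apply (eta_represents B A _ sB sA), represents_swap, Hrep.
    + intros J g h HJ Hglb; apply (InfHom_eta B A), is_glb_tswap; assumption.
Qed.
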